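(* Let $a=(a_k)_{k=0}^{d-1}\in\mathbb C^d$. Then for every $t\in(0,1)$ there exists at least one $n\in\{0,1,\dots,d-1\}$ such that $|a_n|\ge\|a\|_1\,t^{d-n}(t^{-1}-1)$.
   Context: $\|a\|_1=\sum_{k=0}^{d-1}|a_k|$. *)

From HB Require Import structures.
From mathcomp Require Import all_boot all_order all_algebra.
From mathcomp Require Import complex.
Set Implicit Arguments. Unset Strict Implicit. Unset Printing Implicit Defensive.
Import Order.TTheory GRing.Theory Num.Theory.
Local Open Scope ring_scope.

Definition l1norm (R : rcfType) (d : nat) (a : 'I_d -> R[i]) : R :=
  \sum_(k < d) Normc.normc (a k).

From HB Require Import structures.
From mathcomp Require Import all_boot all_order all_algebra.
From mathcomp Require Import complex.
Import Order.TTheory GRing.Theory Num.Theory.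
Local Open Scope ring_scope.

(* The weights w_n = t^(d-n) (t^-1 - 1) telescope to 1 - t^d <= 1, so the masses
   |a_n| cannot all lie strictly below their shares ||a||_1 w_n: summing would
   give ||a||_1 < ||a||_1. *)

Lemma exists_weighted_share_le {R : realDomainType} {I : finType} (i0 : I)
    (f w : I -> R) :
  (forall i, 0 <= f i) -> \sum_i w i <= 1 ->
  exists i, (\sum_j f j) * w i <= f i.
Proof.
move=> f_ge0 sum_w_le1.
have [/existsP //|] := boolP [exists i, (\sum_j f j) * w i <= f i].
rewrite negb_exists => /forallP share_gt.
have S_ge0 : 0 <= \sum_j f j by apply: sumr_ge0.
have : \sum_j f j < \sum_j (\sum_k f k) * w j.
  apply: ltr_sum; first by apply/hasP; exists i0; rewrite ?mem_index_enum.
  by move=> i _; rewrite ltNge share_gt.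
by rewrite -mulr_sumr ltNge ler_piMr.
Qed.

Lemma sum_geometric_weights (R : fieldType) (t : R) (k : nat) : t != 0 ->
  \sum_(n < k) t ^+ (k - n) * (t^-1 - 1) = 1 - t ^+ k.
Proof.
move=> t_neq0; elim: k => [|k IH]; first by rewrite big_ord0 expr0 subrr.
rewrite big_ord_recl subn0.
under eq_bigr => i _ do rewrite lift0 /= subSS.
have tSV : t ^+ k.+1 * t^-1 = t ^+ k by rewrite exprSr -mulrA mulfV // mulr1.
by rewrite IH mulrBr mulr1 tSV addrC addrA subrK.
Qed.

Lemma normc_ge0 {R : rcfType} (z : R[i]) : 0 <= Normc.normc z.
Proof. by case: z => x y; apply: sqrtr_ge0. Qed.

Theorem mainTheorem7 (R : rcfType) (d : nat) (a : 'I_d -> R[i]) (t : R) :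
  (0 < d)%N ->
  0 < t < 1 ->
  exists n : 'I_d,
    l1norm a * t ^+ (d - n) * (t^-1 - 1) <= Normc.normc (a n).
Proof.
move=> d_gt0 /andP[t_gt0 _].
have sum_w_le1 : \sum_(n < d) t ^+ (d - n) * (t^-1 - 1) <= 1.
  rewrite sum_geometric_weights ?gt_eqF // lerBlDr lerDl.
  by rewrite exprn_ge0 // ltW.
have [n share_le] := exists_weighted_share_le (Ordinal d_gt0)
  (fun n => Normc.normc (a n)) (fun n : 'I_d => t ^+ (d - n) * (t^-1 - 1))
  (fun n => normc_ge0 (a n)) sum_w_le1.
by exists n; rewrite -mulrA; exact: share_le.
Qed.
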